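(* Let $A,B:\mathcal K\to\mathcal K$ be linear maps such that $(A,B):\mathcal K\oplus\mathcal K\to\mathcal K$ has rank $\dim\mathcal K$ and $AB^\dagger$ is self-adjoint. Assume that $\det(A-\varkappa B)\neq0$ for some $\varkappa>0$. Then $\mathfrak S(i\varkappa;A,B)$ is self-adjoint. If $L\leq0$, then $\mathfrak S(i\varkappa;A,B)$ is a contraction for all $\varkappa>0$.
   Context: $\mathcal K$ is a finite-dimensional complex Hilbert space. For $\mathsf k\in\mathbb C$ with $\det(A+i\mathsf kB)\neq0$, $\mathfrak S(\mathsf k;A,B)=-(A+i\mathsf kB)^{-1}(A-i\mathsf kB)$; in particular $\mathfrak S(i\varkappa;A,B)=-(A-\varkappa B)^{-1}(A+\varkappa B)$. $P_{\ker B}$ denotes the orthogonal projection onto $\ker B$, $P^\perp_{\ker B}=\mathbb I-P_{\ker B}$, and $L=(B|_{\operatorname{Ran}B^\dagger})^{-1}AP^\perp_{\ker B}$, a self-adjoint operator on $\mathcal K$. *)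

(* finite-dimensional complex Hilbert space K = C^n (column vectors),
   C an arbitrary numClosedFieldType (e.g. complex numbers), linear maps = 'M[C]_n. *)
From Stdlib Require Import ClassicalEpsilon.
From mathcomp Require Import all_boot all_order all_algebra.
Set Implicit Arguments. Unset Strict Implicit. Unset Printing Implicit Defensive.
Import Order.TTheory GRing.Theory Num.Theory.
Local Open Scope ring_scope.
Local Open Scope sesquilinear_scope.

Section Defs.
Context {C : numClosedFieldType}.

(* inner product <u, v> = sum_i u_i * conj (v_i) on column vectors *)
Definition cdot n (u v : 'cV[C]_n) : C := dotmx u^T v^T.

Definition adj m n (M : 'M[C]_(m, n)) : 'M[C]_(n, m) := M ^t*.

Definition selfadj n (M : 'M[C]_n) : Prop := adj M = M.

Definition contraction n (S : 'M[C]_n) : Prop :=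
  forall v : 'cV[C]_n, cdot (S *m v) (S *m v) <= cdot v v.

Definition nonpos_op n (L : 'M[C]_n) : Prop :=
  forall v : 'cV[C]_n, cdot (L *m v) v <= 0.

Definition is_orth_proj_ker n (B P : 'M[C]_n) : Prop :=
  forall v : 'cV[C]_n, B *m (P *m v) = 0 /\
    (forall w : 'cV[C]_n, B *m w = 0 -> cdot (v - P *m v) w = 0).

Definition Pker n (B : 'M[C]_n) : 'M[C]_n :=
  epsilon (inhabits 0) (is_orth_proj_ker B).

Definition Pker_perp n (B : 'M[C]_n) : 'M[C]_n := 1%:M - Pker B.

(* L = (B|_{Ran B^dagger})^{-1} A P^perp_{ker B}: for every v, L v lies in
   Ran B^dagger and B (L v) = A P^perp v *)
Definition is_Lop n (A B L : 'M[C]_n) : Prop :=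
  forall v : 'cV[C]_n,
    (exists u : 'cV[C]_n, L *m v = adj B *m u) /\
    B *m (L *m v) = A *m (Pker_perp B *m v).

Definition Lop n (A B : 'M[C]_n) : 'M[C]_n :=
  epsilon (inhabits 0) (is_Lop A B).

Definition Smat n (k : C) (A B : 'M[C]_n) : 'M[C]_n :=
  - (invmx (A + ('i * k) *: B) *m (A - ('i * k) *: B)).

End Defs.

(** The boundary conditions [(A, B)] are dissipative: [0 <= <phi, psi>] whenever
    [A phi + B psi = 0].  Indeed, the rank condition and the self-adjointness of
    [A B^dagger] force [(phi, psi) = (B^dagger u, - A^dagger u)], and then
    [<phi, psi> = - <A B^dagger u, u> = - <L B^dagger u, B^dagger u> >= 0].
    Writing [y = S(i kappa) v], we get [A (v + y) + B (kappa (v - y)) = 0], hence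
    [0 <= kappa <v + y, v - y>], whose real part is [kappa (|v|^2 - |y|^2)];
    likewise [A x = kappa B x] gives [0 <= - kappa |x|^2], so [A - kappa B]
    is injective.
    Self-adjointness of [S(i kappa)] is the identity
    [(A - kappa B)(A + kappa B)^dagger = (A + kappa B)(A - kappa B)^dagger]. *)

From Stdlib Require Import ClassicalEpsilon.
From mathcomp Require Import all_boot all_order all_algebra zify ring.
Import Order.TTheory GRing.Theory Num.Theory.
Set Implicit Arguments. Unset Strict Implicit. Unset Printing Implicit Defensive.
Local Open Scope ring_scope.
Local Open Scope sesquilinear_scope.

Section KernelRange.
Variable F : fieldType.

Lemma submx_of_ker m p n (W : 'M[F]_(m, n)) (B : 'M[F]_(p, n)) :
  (forall x : 'cV_n, B *m x = 0 -> W *m x = 0) -> (W <= B)%MS.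
Proof.
move=> kerBW; rewrite submxE; apply/eqP/matrixP => i j.
have colWX : col j (W *m cokermx B) = 0.
  by rewrite colE -mulmxA -colE kerBW // colE mulmxA mulmx_coker mul0mx.
by have /matrixP/(_ i 0) := colWX; rewrite !mxE.
Qed.

Lemma ker_sub_range m p k (K : 'M[F]_(m, p)) (N : 'M[F]_(p, k)) :
  K *m N = 0 -> (p <= \rank K + \rank N)%N ->
  forall x : 'cV_p, K *m x = 0 -> exists u, x = N *m u.
Proof.
move=> KN0 rankKN x Kx0.
have NkerK : (N^T <= kermx K^T)%MS.
  by apply/sub_kermxP; rewrite -trmx_mul KN0 trmx0.
have kerKN : (kermx K^T <= N^T)%MS.
  have := mxrankS NkerK.
  by rewrite -(mxrank_leqif_sup NkerK) mxrank_ker !mxrank_tr; lia.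
have xkerK : (x^T <= kermx K^T)%MS.
  by apply/sub_kermxP; rewrite -trmx_mul Kx0 trmx0.
have /submxP[u xE] := submx_trans xkerK kerKN.
by exists u^T; rewrite -[x]trmxK xE trmx_mul trmxK.
Qed.

Lemma det_neq0_of_ker0 n (M : 'M[F]_n) :
  (forall x : 'cV_n, M *m x = 0 -> x = 0) -> \det M != 0.
Proof.
move=> ker0; rewrite -det_tr; apply/negP => /det0P[v v_neq0 vM0].
have /eqP : v^T = 0 by apply: ker0; rewrite -[M]trmxK -trmx_mul vM0 trmx0.
by rewrite trmx_eq0 (negbTE v_neq0).
Qed.

End KernelRange.

Section ConjugateTranspose.
Variables (C : numClosedFieldType) (m n p : nat).
Implicit Types (M N : 'M[C]_(m, n)).

Lemma trmxC_mul M (P : 'M[C]_(n, p)) : (M *m P)^t* = P^t* *m M^t*.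
Proof. by rewrite trmx_mul map_mxM. Qed.

Lemma trmxCD M N : (M + N)^t* = M^t* + N^t*.
Proof. by rewrite linearD map_mxD. Qed.

Lemma trmxCN M : (- M)^t* = - M^t*.
Proof. by rewrite linearN map_mxN. Qed.

Lemma trmxCB M N : (M - N)^t* = M^t* - N^t*.
Proof. by rewrite trmxCD trmxCN. Qed.

Lemma trmxCZ a M : (a *: M)^t* = a^* *: M^t*.
Proof. by rewrite linearZ map_mxZ. Qed.

End ConjugateTranspose.

Section InnerProduct.
Variables (C : numClosedFieldType) (n : nat).
Implicit Types (u v w : 'cV[C]_n) (M : 'M[C]_n).

Lemma cdotE u v : cdot u v = (v^t* *m u) 0 0.
Proof. by rewrite /cdot dotmxE !mxE; apply: eq_bigr => i _; rewrite !mxE mulrC. Qed.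

Lemma cdot_ge0 u : 0 <= cdot u u.
Proof. exact: dnorm_ge0. Qed.

Lemma cdot_eq0 u : (cdot u u == 0) = (u == 0).
Proof. by rewrite /cdot dnorm_eq0 trmx_eq0. Qed.

Lemma cdotC u v : (cdot u v)^* = cdot v u.
Proof. by rewrite /cdot hermC /= expr0 mul1r conjCK. Qed.

Lemma cdotDl u v w : cdot (u + v) w = cdot u w + cdot v w.
Proof. by rewrite /cdot linearD linearDl. Qed.

Lemma cdotBl u v w : cdot (u - v) w = cdot u w - cdot v w.
Proof. by rewrite /cdot linearB linearBl. Qed.

Lemma cdotDr u v w : cdot u (v + w) = cdot u v + cdot u w.
Proof. by rewrite /cdot linearD linearDr. Qed.

Lemma cdotBr u v w : cdot u (v - w) = cdot u v - cdot u w.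
Proof. by rewrite /cdot linearB linearBr. Qed.

Lemma cdotNr u v : cdot u (- v) = - cdot u v.
Proof. by rewrite /cdot linearN linearNr. Qed.

Lemma cdotZr a u v : cdot u (a *: v) = a^* * cdot u v.
Proof. by rewrite /cdot linearZ linearZr. Qed.

Lemma cdot0r u : cdot u 0 = 0.
Proof. by rewrite /cdot trmx0 linear0r. Qed.

Lemma cdot_mulmxl M u v : cdot (M *m u) v = cdot u (M^t* *m v).
Proof. by rewrite !cdotE trmxC_mul trmxCK mulmxA. Qed.

Lemma cdot_polar u v :
  cdot (u + v) (u - v) + cdot (u - v) (u + v) = (cdot u u - cdot v v) *+ 2.
Proof. by rewrite !(cdotBl, cdotDl, cdotBr, cdotDr); ring. Qed.

End InnerProduct.

Section KerProjection.
Variables (C : numClosedFieldType) (n : nat) (B : 'M[C]_n).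
Implicit Types u v : 'cV[C]_n.

Lemma orth_proj_ker_exists : exists P, is_orth_proj_ker B P.
Proof.
(* The rows of [kermx B^T] are the transposes of the vectors of [ker B]. *)
pose Q := proj_ortho (kermx B^T); exists Q^T => v; split.
  have /sub_kermxP := proj_ortho_sub (kermx B^T) v^T.
  by move/(congr1 trmx); rewrite !trmx_mul !trmxK trmx0 mulmxA.
move=> w Bw0; have /submxP[D wE] : (w^T <= kermx B^T)%MS.
  by apply/sub_kermxP; rewrite -trmx_mul Bw0 trmx0.
have /orthomx1P vQ_orth := proj_ortho_compl_sub (kermx B^T) v^T.
rewrite /cdot dotmxE wE trmxC_mul linearB /= trmx_mul trmxK.
by rewrite mulmxA vQ_orth mul0mx mxE.
Qed.

Lemma Pker_spec : is_orth_proj_ker B (Pker B).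
Proof. by apply: epsilon_spec; exact: orth_proj_ker_exists. Qed.

Lemma mulmx_Pker_perp v : B *m (Pker_perp B *m v) = B *m v.
Proof.
have [BPv0 _] := Pker_spec v.
by rewrite /Pker_perp mulmxBl mul1mx mulmxBr BPv0 subr0.
Qed.

Lemma Pker_perp_adj u : Pker_perp B *m (B^t* *m u) = B^t* *m u.
Proof.
set v := B^t* *m u; have [BPv0 Pv_orth] := Pker_spec v.
have v_orth : cdot v (Pker B *m v) = 0.
  by rewrite cdot_mulmxl trmxCK BPv0 cdot0r.
have : cdot (Pker B *m v) (Pker B *m v) = 0.
  rewrite -{1}[Pker B *m v](subKr v).
  by rewrite cdotBl v_orth Pv_orth // subrr.
move/eqP; rewrite cdot_eq0 => /eqP Pv0.
by rewrite /Pker_perp mulmxBl mul1mx Pv0 subr0.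
Qed.

Lemma Pker_perp_range : exists H, Pker_perp B = B^t* *m H.
Proof.
have /submxP[D PE] : ((Pker_perp B)^t* <= B)%MS.
  apply: submx_of_ker => x Bx0; set y := (Pker_perp B)^t* *m x.
  have : cdot (Pker_perp B *m y) x = 0.
    by have [_ orth] := Pker_spec y; rewrite /Pker_perp mulmxBl mul1mx orth.
  by rewrite cdot_mulmxl => /eqP; rewrite cdot_eq0 => /eqP.
by exists (D^t*); rewrite -[Pker_perp B]trmxCK PE trmxC_mul.
Qed.

End KerProjection.

Definition dissipative (C : numClosedFieldType) n (A B : 'M[C]_n) :=
  forall phi psi : 'cV[C]_n, A *m phi + B *m psi = 0 -> 0 <= cdot phi psi.

Section BoundaryConditions.
Variables (C : numClosedFieldType) (n : nat) (A B : 'M[C]_n).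
Hypothesis AB_herm : A *m B^t* = B *m A^t*.

Lemma Lop_spec : is_Lop A B (Lop A B).
Proof.
apply: epsilon_spec; have [H PE] := Pker_perp_range B.
exists (Pker_perp B *m A^t* *m H) => v; split.
  by exists (H *m A^t* *m H *m v); rewrite /adj {1}PE !mulmxA.
by rewrite -!mulmxA mulmx_Pker_perp mulmxA -AB_herm PE !mulmxA.
Qed.

Lemma cdot_Lop_adj u :
  cdot (Lop A B *m (B^t* *m u)) (B^t* *m u) = cdot (A *m (B^t* *m u)) u.
Proof.
by have [_ BL] := Lop_spec (B^t* *m u); rewrite -cdot_mulmxl BL Pker_perp_adj.
Qed.

Hypothesis AB_rank : \rank (row_mx A B) = n.

Lemma ker_row_mx_adj (phi psi : 'cV[C]_n) : A *m phi + B *m psi = 0 ->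
  exists u : 'cV_n, phi = B^t* *m u /\ psi = - (A^t* *m u).
Proof.
move=> ABz; pose N := col_mx (B^t*) (- A^t*).
have rankN : (n <= \rank N)%N.
  have -> : N = (row_mx B (- A))^t*.
    by rewrite tr_row_mx map_col_mx trmxCN.
  rewrite mxrank_map mxrank_tr -{1}AB_rank.
  have <- : row_mx B (- A) *m block_mx 0 1%:M (- 1%:M) 0 = row_mx A B.
    by rewrite mul_row_block !mulmx0 mulmxN mulNmx opprK !mulmx1 add0r addr0.
  exact: mxrankM_maxl.
have [|||u] := @ker_sub_range _ _ _ _ (row_mx A B) N _ _ (col_mx phi psi).
- by rewrite mul_row_col mulmxN AB_herm subrr.
- by rewrite AB_rank leq_add2l.
- by rewrite mul_row_col.
by rewrite mul_col_mx mulNmx => /eq_col_mx[-> ->]; exists u.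
Qed.

Lemma dissipative_of_Lop_nonpos : nonpos_op (Lop A B) -> dissipative A B.
Proof.
move=> L_nonpos phi psi /ker_row_mx_adj[u [-> ->]].
by rewrite cdotNr -cdot_mulmxl -cdot_Lop_adj oppr_ge0.
Qed.

End BoundaryConditions.

Lemma Smat_iE (C : numClosedFieldType) n (A B : 'M[C]_n) k :
  Smat ('i * k) A B = - (invmx (A - k *: B) *m (A + k *: B)).
Proof. by rewrite /Smat mulrA mulCii mulN1r !scaleNr opprK. Qed.

Lemma selfadj_invmx_mul (C : numClosedFieldType) n (M N : 'M[C]_n) :
  M \in unitmx -> M *m N^t* = N *m M^t* -> selfadj (invmx M *m N).
Proof.
move=> Mu MN; rewrite /selfadj /adj trmxC_mul trmx_inv map_invmx.
have Mtu : M^t* \in unitmx by rewrite map_unitmx unitmx_tr.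
by apply: (canLR (mulmxK Mtu)); rewrite -mulmxA -MN mulKmx.
Qed.

Lemma Smat_selfadj (C : numClosedFieldType) n (A B : 'M[C]_n) k :
  A *m B^t* = B *m A^t* -> k \is Num.real -> \det (A - k *: B) != 0 ->
  selfadj (Smat ('i * k) A B).
Proof.
move=> AB_herm k_real detk; rewrite Smat_iE /selfadj /adj trmxCN.
congr (- _); apply: selfadj_invmx_mul; first by rewrite unitmxE unitfE.
rewrite trmxCD trmxCB !trmxCZ conj_Creal //.
rewrite !(mulmxDl, mulmxDr, mulNmx, mulmxN).
by rewrite -!scalemxAl -!scalemxAr AB_herm !addrA addrK subrK.
Qed.

Section Dissipative.
Variables (C : numClosedFieldType) (n : nat) (A B : 'M[C]_n).
Hypothesis AB_diss : dissipative A B.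

Lemma det_sub_scale_neq0 k : 0 < k -> \det (A - k *: B) != 0.
Proof.
move=> k_gt0; apply: det_neq0_of_ker0 => x ABx0.
have : 0 <= cdot x (- k *: x).
  by apply: AB_diss; rewrite -scalemxAr scaleNr scalemxAl -mulmxBl ABx0.
rewrite cdotZr rmorphN /= conj_Creal ?gtr0_real // mulNr oppr_ge0 pmulr_rle0 //.
by move=> x_le0; apply/eqP; rewrite -cdot_eq0 eq_le x_le0 cdot_ge0.
Qed.

Lemma Smat_contraction k : 0 < k -> contraction (Smat ('i * k) A B).
Proof.
move=> k_gt0 v; rewrite Smat_iE; set y := _ *m v.
have ABz : A *m (v + y) + B *m (k *: (v - y)) = 0.
  have Mu : A - k *: B \in unitmx by rewrite unitmxE unitfE det_sub_scale_neq0.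
  have My : (A - k *: B) *m y = - ((A + k *: B) *m v).
    by rewrite /y mulNmx mulmxN -!mulmxA mulKVmx.
  rewrite mulmxDr -scalemxAr scalemxAl mulmxBr addrACA -mulmxDl -mulmxBl.
  by rewrite My addrN.
have X_ge0 : 0 <= cdot (v + y) (v - y).
  by have := AB_diss ABz; rewrite cdotZr conj_Creal ?gtr0_real // pmulr_rge0.
have X_polar : cdot (v + y) (v - y) *+ 2 = (cdot v v - cdot y y) *+ 2.
  by rewrite -cdot_polar -(cdotC (v + y)) (geC0_conj X_ge0) mulr2n.
by rewrite -subr_ge0 -(pmulrn_lge0 _ (isT : (0 < 2)%N)) -X_polar mulrn_wge0.
Qed.

End Dissipative.

Theorem corollary2p5 (C : numClosedFieldType) (n : nat) (A B : 'M[C]_n) (kappa0 : C) :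
  \rank (row_mx A B) = n ->
  selfadj (A *m adj B) ->
  0 < kappa0 ->
  \det (A - kappa0 *: B) != 0 ->
  selfadj (Smat ('i * kappa0) A B) /\
  (nonpos_op (Lop A B) ->
   forall kappa : C, 0 < kappa ->
     \det (A - kappa *: B) != 0 /\ contraction (Smat ('i * kappa) A B)).
Proof.
move=> AB_rank AB_selfadj kappa0_gt0 det0.
have AB_herm : A *m B^t* = B *m A^t*.
  by move: AB_selfadj; rewrite /selfadj /adj trmxC_mul trmxCK => ->.
split; first exact: Smat_selfadj AB_herm (gtr0_real kappa0_gt0) det0.
move=> L_nonpos kappa kappa_gt0.
have AB_diss := dissipative_of_Lop_nonpos AB_herm AB_rank L_nonpos.
by split; [exact: det_sub_scale_neq0 | exact: Smat_contraction].
Qed.
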